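(* Let $n\ge 2$ and let $f\colon Br_2^n\to Br_d^n$ be the homomorphism defined on generators by $f(\sigma_{i,0})=\sigma_i$ and $f(\sigma_{i,1})=\gamma_i\sigma_i\gamma_{i+1}$ for $i=1,\dots,n-1$. If $\Gamma_1,\Gamma_2\in Br_2^n$ satisfy $f(\Gamma_1)=f(\Gamma_2)$ in $Br_d^n$ (i.e. they are equal as dotted braids), then $\Gamma_1=\Gamma_2$ in $Br_2^n$.
   Context: $Br_2^n$ (the $\mathbb{Z}_2$-braid group) is the group with generators $\sigma_{i,0},\sigma_{i,1}$, $i=1,\dots,n-1$, and relations $\sigma_{i,\varepsilon}\sigma_{j,\eta}=\sigma_{j,\eta}\sigma_{i,\varepsilon}$ for all $|i-j|\ge 2$ and all $\varepsilon,\eta\in\{0,1\}$, and $\sigma_{i,\varepsilon}\sigma_{i+1,\eta}\sigma_{i,\xi}=\sigma_{i+1,\xi}\sigma_{i,\eta}\sigma_{i+1,\varepsilon}$ for $1\le i\le n-2$ and all $\varepsilon,\eta,\xi\in\{0,1\}$ with $\varepsilon+\eta+\xi\equiv 0\pmod 2$. The dotted braid group $Br_d^n$ is the group with generators $\sigma_1,\dots,\sigma_{n-1}$, $\gamma_1,\dots,\gamma_n$ and relations: $\sigma_i\sigma_j=\sigma_j\sigma_i$ for $|i-j|\ge2$; $\sigma_i\sigma_{i+1}\sigma_i=\sigma_{i+1}\sigma_i\sigma_{i+1}$ for $1\le i\le n-2$; $\gamma_i^2=e$ for $i=1,\dots,n$; $\gamma_i\gamma_j=\gamma_j\gamma_i$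 for all $i,j$; and $\gamma_i\gamma_{i+1}\sigma_i\gamma_i\gamma_{i+1}=\sigma_i$ for $i=1,\dots,n-2$. (The paper asserts that $f$ is a well-defined homomorphism.) *)

From mathcomp Require Import all_boot.
Set Implicit Arguments.
Unset Strict Implicit.
Unset Printing Implicit Defensive.

(* A letter (x, b) stands for x if b = false and for x^{-1} if b = true. *)
Definition word (X : Type) := seq (X * bool).

Definition inv_word (X : Type) (u : word X) : word X :=
  rev (map (fun p => (p.1, ~~ p.2)) u).

Inductive pres_eq (X : Type) (R : word X -> word X -> Prop)
  : word X -> word X -> Prop :=
| pe_refl u : pres_eq R u u
| pe_sym u v : pres_eq R u v -> pres_eq R v u
| pe_trans u v w : pres_eq R u v -> pres_eq R v w -> pres_eq R u w
| pe_cat u u' v v' : pres_eq R u u' -> pres_eq R v v' ->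
    pres_eq R (u ++ v) (u' ++ v')
| pe_free x b : pres_eq R [:: (x, b); (x, ~~ b)] [::]
| pe_rel u v : R u v -> pres_eq R u v.

(* Generator sigma_{i,e} (e = false <-> epsilon = 0), 1 <= i <= n-1. *)
Definition gen2 (n : nat) := {p : nat * bool | (0 < p.1 < n)%N}.

Definition s2 (n i : nat) (e : bool) (H : (0 < (i, e).1 < n)%N) : gen2 n :=
  exist _ (i, e) H.

Definition pos (X : Type) (x : X) : X * bool := (x, false).

Definition rel2 (n : nat) (u v : word (gen2 n)) : Prop :=
  (exists (i j : nat) (e h : bool) (Hi : (0 < (i, e).1 < n)%N)
          (Hj : (0 < (j, h).1 < n)%N),
     (i + 2 <= j \/ j + 2 <= i)%N /\
     u = [:: pos (s2 Hi); pos (s2 Hj)] /\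
     v = [:: pos (s2 Hj); pos (s2 Hi)])
  \/
  (exists (i : nat) (e h x : bool)
          (Hie : (0 < (i, e).1 < n)%N) (Hjh : (0 < (i.+1, h).1 < n)%N)
          (Hix : (0 < (i, x).1 < n)%N) (Hjx : (0 < (i.+1, x).1 < n)%N)
          (Hih : (0 < (i, h).1 < n)%N) (Hje : (0 < (i.+1, e).1 < n)%N),
     ~~ (e (+) h (+) x) /\
     u = [:: pos (s2 Hie); pos (s2 Hjh); pos (s2 Hix)] /\
     v = [:: pos (s2 Hjx); pos (s2 Hih); pos (s2 Hje)]).

Definition br2_eq (n : nat) := pres_eq (@rel2 n).

Inductive dgen_raw := DSig of nat | DGam of nat.

Definition dvalid (n : nat) (g : dgen_raw) : bool :=
  match g with
  | DSig i => (0 < i < n)%N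
  | DGam i => (0 < i <= n)%N
  end.

Definition gend (n : nat) := {g : dgen_raw | dvalid n g}.

Definition dsig (n i : nat) (H : dvalid n (DSig i)) : gend n := exist (fun g => dvalid n g) _ H.
Definition dgam (n i : nat) (H : dvalid n (DGam i)) : gend n := exist (fun g => dvalid n g) _ H.

Definition reld (n : nat) (u v : word (gend n)) : Prop :=
  (exists (i j : nat) (Hi : dvalid n (DSig i)) (Hj : dvalid n (DSig j)),
     (i + 2 <= j \/ j + 2 <= i)%N /\
     u = [:: pos (dsig Hi); pos (dsig Hj)] /\
     v = [:: pos (dsig Hj); pos (dsig Hi)])
  \/
  (exists (i : nat) (Hi : dvalid n (DSig i)) (Hj : dvalid n (DSig i.+1)),
     u = [:: pos (dsig Hi); pos (dsig Hj); pos (dsig Hi)] /\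
     v = [:: pos (dsig Hj); pos (dsig Hi); pos (dsig Hj)])
  \/
  (exists (i : nat) (Hi : dvalid n (DGam i)),
     u = [:: pos (dgam Hi); pos (dgam Hi)] /\ v = [::])
  \/
  (exists (i j : nat) (Hi : dvalid n (DGam i)) (Hj : dvalid n (DGam j)),
     u = [:: pos (dgam Hi); pos (dgam Hj)] /\
     v = [:: pos (dgam Hj); pos (dgam Hi)])
  \/
  (exists (i : nat) (Hs : dvalid n (DSig i)) (Hg : dvalid n (DGam i))
          (Hg' : dvalid n (DGam i.+1)),
     (i <= n - 2)%N /\
     u = [:: pos (dgam Hg); pos (dgam Hg'); pos (dsig Hs);
             pos (dgam Hg); pos (dgam Hg')] /\
     v = [:: pos (dsig Hs)]).

Definition brd_eq (n : nat) := pres_eq (@reld n).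

Lemma f_sig_ok n i : (0 < i < n)%N -> dvalid n (DSig i).
Proof. by []. Qed.

Lemma f_gam_ok n i : (0 < i < n)%N -> dvalid n (DGam i).
Proof. by rewrite /dvalid => /andP[-> /ltnW]. Qed.

Lemma f_gam1_ok n i : (0 < i < n)%N -> dvalid n (DGam i.+1).
Proof. by rewrite /dvalid => /andP[_ ->]. Qed.

Definition f_gen (n : nat) (g : gen2 n) : word (gend n) :=
  let H := svalP g in
  if (sval g).2
  then [:: pos (dgam (f_gam_ok H)); pos (dsig (f_sig_ok H));
          pos (dgam (f_gam1_ok H))]
  else [:: pos (dsig (f_sig_ok H))].

Definition f_word (n : nat) (w : word (gen2 n)) : word (gend n) :=
  flatten (map (fun p => if p.2 then inv_word (f_gen p.1) else f_gen p.1) w).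

(* Br_d^n acts on pairs (G, c), where G is a word of Br_2^n and c : nat -> bool
   colours the strands: sigma_i appends sigma_{i, c_i + c_{i+1}} to G and swaps
   c_i and c_{i+1}, while gamma_j flips c_j.  The relations of Br_d^n hold for
   this action, and f(G) sends (1, 0) to (G, 0); hence f has a left inverse. *)
From mathcomp Require Import all_boot zify.
From Stdlib Require Import FunctionalExtensionality.
Set Implicit Arguments.
Unset Strict Implicit.
Unset Printing Implicit Defensive.

Section PresentationAction.
Variables (X S : Type) (R : word X -> word X -> Prop) (sim : S -> S -> Prop).
Variable act : X * bool -> S -> S.

Definition act_word (u : word X) (s : S) : S := foldl (fun s p => act p s) s u.

Lemma act_word_cat u v s : act_word (u ++ v) s = act_word v (act_word u s).
Proof. exact: foldl_cat. Qed.

Hypothesis sim_refl : forall s, sim s s.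
Hypothesis sim_sym : forall s t, sim s t -> sim t s.
Hypothesis sim_trans : forall s t r, sim s t -> sim t r -> sim s r.
Hypothesis act_sim : forall p s t, sim s t -> sim (act p s) (act p t).
Hypothesis act_free : forall x b s, sim (act (x, ~~ b) (act (x, b) s)) s.
Hypothesis act_rel : forall u v s, R u v -> sim (act_word u s) (act_word v s).

Lemma act_word_sim u s t : sim s t -> sim (act_word u s) (act_word u t).
Proof. by elim: u s t => [|p u IHu] s t //= /(act_sim p); apply: IHu. Qed.

Lemma pres_eq_act_word u v :
  pres_eq R u v -> forall s, sim (act_word u s) (act_word v s).
Proof.
elim=> {u v} [u s | u v _ IH s | u v w _ IHuv _ IHvw s | u u' v v' _ IHu _ IHv s
  | x b s | u v Ruv s]; first exact: sim_refl.
- exact: sim_sym.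
- exact: sim_trans (IHuv s) (IHvw s).
- rewrite !act_word_cat; apply: sim_trans (IHv _) _; exact: act_word_sim.
- exact: act_free.
- exact: act_rel.
Qed.

End PresentationAction.

Section Colourings.
Implicit Types (c : nat -> bool) (i j k : nat).

Definition cswap i c k := if k == i then c i.+1 else if k == i.+1 then c i else c k.
Definition cflip j c k := if k == j then ~~ c k else c k.

Lemma cswap_l i c : cswap i c i = c i.+1.
Proof. by rewrite /cswap eqxx. Qed.

Lemma cswap_r i c : cswap i c i.+1 = c i.
Proof. by rewrite /cswap eqxx ifN_eq //; lia. Qed.

Lemma cswap_other i c k : k != i -> k != i.+1 -> cswap i c k = c k.
Proof. by rewrite /cswap => /negbTE-> /negbTE->. Qed.

Lemma cswap_below i c k : (k < i)%N -> cswap i c k = c k.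
Proof. by move=> ki; apply: cswap_other; lia. Qed.

Lemma cswap_above i c k : (i.+1 < k)%N -> cswap i c k = c k.
Proof. by move=> ik; apply: cswap_other; lia. Qed.

Ltac colour_ext := apply: functional_extensionality => k; rewrite /cswap /cflip;
  do ! case: eqP => ? //; (congr (_ _); lia) || lia.

Lemma cswapK i : involutive (cswap i).
Proof. by move=> c; colour_ext. Qed.

Lemma cflipK j : involutive (cflip j).
Proof.
by move=> c; apply: functional_extensionality => k; rewrite /cflip; case: eqP; rewrite ?negbK.
Qed.

Lemma cflipC i j c : cflip i (cflip j c) = cflip j (cflip i c).
Proof. by colour_ext. Qed.

Lemma cswapC i j c : (i + 2 <= j \/ j + 2 <= i)%N ->
  cswap j (cswap i c) = cswap i (cswap j c).
Proof. by move=> ij; colour_ext. Qed.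

Lemma cswap_braid i c :
  cswap i (cswap i.+1 (cswap i c)) = cswap i.+1 (cswap i (cswap i.+1 c)).
Proof. by colour_ext. Qed.

Lemma cflip_cswap_cflipS i c : cflip i (cswap i (cflip i.+1 c)) = cswap i c.
Proof. by colour_ext. Qed.

Lemma cflipS_cswap_cflip i c : cflip i.+1 (cswap i (cflip i c)) = cswap i c.
Proof. by colour_ext. Qed.

Lemma cswap_const i b : cswap i (fun=> b) = (fun=> b).
Proof. by apply: functional_extensionality => k; rewrite /cswap !if_same. Qed.

Lemma cflip2_sum i c :
  let c' := cflip i.+1 (cflip i c) in c' i (+) c' i.+1 = c i (+) c i.+1.
Proof.
by rewrite /cflip /= !eqxx (gtn_eqF (ltnSn i)) (ltn_eqF (ltnSn i)) addbN addNb negbK.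
Qed.

End Colourings.

Section DottedBraidAction.
Variable n : nat.

Definition dstate := (word (gen2 n) * (nat -> bool))%type.

Definition dstate_eq (s t : dstate) := br2_eq s.1 t.1 /\ s.2 = t.2.

Definition dact (p : gend n * bool) (s : dstate) : dstate :=
  let: (exist g Hg, b) := p in
  match g return dvalid n g -> dstate with
  | DSig i => fun Hi => (s.1 ++ [:: (s2 (e := s.2 i (+) s.2 i.+1) Hi, b)], cswap i s.2)
  | DGam j => fun _ => (s.1, cflip j s.2)
  end Hg.

Lemma dstate_eq_refl s : dstate_eq s s.
Proof. by split; first exact: pe_refl. Qed.

Lemma dstate_eq_sym s t : dstate_eq s t -> dstate_eq t s.
Proof. by case=> Hw Hc; split; [apply: pe_sym|]. Qed.

Lemma dstate_eq_trans s t r : dstate_eq s t -> dstate_eq t r -> dstate_eq s r.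
Proof. by case=> Hw1 Hc1 [Hw2 Hc2]; split; [apply: pe_trans Hw2 | rewrite Hc1]. Qed.

Lemma dact_eq p s t : dstate_eq s t -> dstate_eq (dact p s) (dact p t).
Proof.
case: s t => w c [w' _] [/= Hw <-]; case: p => [[[i|j] H] b] //=.
by split=> //; apply: pe_cat => //; apply: pe_refl.
Qed.

Lemma dact_free x b s : dstate_eq (dact (x, ~~ b) (dact (x, b) s)) s.
Proof.
case: s => w c; case: x => [[i|j] H] /=; last by rewrite cflipK; apply: dstate_eq_refl.
rewrite cswap_l cswap_r cswapK addbC; split=> //=.
rewrite -catA -[w in X in br2_eq _ X]cats0.
by apply: pe_cat; [exact: pe_refl | exact: pe_free].
Qed.

Lemma br2_eq_cat_rel w u v : @rel2 n u v -> br2_eq (w ++ u) (w ++ v).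
Proof. by move=> Ruv; apply: pe_cat; [apply: pe_refl | apply: pe_rel]. Qed.

Lemma dact_rel u v s : reld u v -> dstate_eq (act_word dact u s) (act_word dact v s).
Proof.
case: s => w c.
case=> [[i [j [Hi [Hj [ij [-> ->]]]]]] | [[i [Hi [Hj [-> ->]]]] | [[i [Hi [-> ->]]]
  | [[i [j [Hi [Hj [-> ->]]]]] | [i [Hs [Hg [Hg' [_ [-> ->]]]]]]]]]] /=.
- rewrite !cswap_other; try lia.
  rewrite cswapC //; split=> //; rewrite -!catA; apply: br2_eq_cat_rel; left.
  by exists i, j, (c i (+) c i.+1), (c j (+) c j.+1), Hi, Hj.
- rewrite !(cswap_l, cswap_r, cswap_below _ (ltnSn i), cswap_above _ (ltnSn i.+1)).
  rewrite cswap_braid; split=> //; rewrite -!catA; apply: br2_eq_cat_rel; right.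
  exists i, (c i (+) c i.+1), (c i (+) c i.+2), (c i.+1 (+) c i.+2).
  exists Hi, Hj, Hi, Hj, Hi, Hj; split=> //.
  by case: (c i); case: (c i.+1); case: (c i.+2).
- by rewrite cflipK; apply: dstate_eq_refl.
- by rewrite cflipC; apply: dstate_eq_refl.
- rewrite cflip2_sum cflip_cswap_cflipS cflipS_cswap_cflip; exact: dstate_eq_refl.
Qed.

Definition uncoloured : nat -> bool := fun=> false.

Definition f_letter (p : gen2 n * bool) : word (gend n) :=
  if p.2 then inv_word (f_gen p.1) else f_gen p.1.

Lemma act_f_letter p w :
  act_word dact (f_letter p) (w, uncoloured) = (w ++ [:: p], uncoloured).
Proof.
case: p => [[[i e] H] b]; case: e H => H; case: b; rewrite /f_letter /f_gen /inv_word /=.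
all: rewrite ?cflip_cswap_cflipS ?cflipS_cswap_cflip cswap_const.
all: congr (_ ++ [:: (_, _)], _); apply: val_inj.
all: by rewrite /= /cflip ?eqxx ?(ltn_eqF (ltnSn i)) ?(gtn_eqF (ltnSn i)).
Qed.

Lemma act_f_word G w :
  act_word dact (f_word G) (w, uncoloured) = (w ++ G, uncoloured).
Proof.
elim: G w => [|p G IHG] w; first by rewrite cats0.
have -> : f_word (p :: G) = f_letter p ++ f_word G by [].
by rewrite act_word_cat act_f_letter IHG -catA.
Qed.

Lemma brd_eq_act u v :
  brd_eq u v -> forall s, dstate_eq (act_word dact u s) (act_word dact v s).
Proof.
exact: (pres_eq_act_word dstate_eq_refl dstate_eq_sym dstate_eq_trans
  dact_eq dact_free dact_rel).
Qed.

End DottedBraidAction.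

Theorem theorem3 (n : nat) (Hn : (2 <= n)%N) (G1 G2 : word (gen2 n)) :
  brd_eq (f_word G1) (f_word G2) -> br2_eq G1 G2.
Proof.
move=> /brd_eq_act/(_ ([::], uncoloured)).
by rewrite !act_f_word => -[].
Qed.
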